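(* Let $p$ be a prime and let $\theta\in\mathbb{F}_p((X^{-1}))$ be a counterexample to the $X$-adic Littlewood conjecture over $\mathbb{F}_p$ with finite deficiency $D(\theta)\in\mathbb{N}_0$, i.e. for every $r\ge0$ all partial quotients $A^{(r)}_j$ of the simple continued fraction expansion of $\langle X^r\theta\rangle$ satisfy $\deg(A^{(r)}_j)\le D(\theta)+1$. Then for every $m>D(\theta)$ the three $\mathbb{N}\times m$ matrices $I^{(m)}$, $H^{(m)}(\theta)$ and $J^{(m)}$ generate a digital $(D(\theta),m,3)$-net over $\mathbb{F}_p$.
   Context: $\mathbb{F}_p((X^{-1}))$ is the field of formal Laurent series $\theta=\sum_{i=j}^\infty a_iX^{-i}$ over $\mathbb{F}_p$, with $|\theta|=2^{-j}$ for $a_j\ne0$, fractional part $\langle\theta\rangle=\sum_{i\ge\max\{1,j\}}a_iX^{-i}$, $\|\theta\|=|\langle\theta\rangle|$; $\theta$ is a counterexample to the $X$-adic Littlewood conjecture if $\inf_{r\ge0,Q\in\mathbb{F}_p[X]\setminus\{0\}}|Q|\cdot\|X^rQ\theta\|>0$. Matrices (rows indexed by $1,2,\dots$, columns by $0,\dots,m-1$): $I^{(m)}$ has entry $1$ in row $k$, column $k-1$ and $0$ elsewhere; $H^{(m)}(\theta)$ has entry $a_{k+l}$ in row $k$, column $l$ (with $a_i=0$ for $1\le i<j$); $J^{(m)}$ is the upper antidiagonal matrix with entry $1$ in row $k$, column $m-k$ for $1\le k\le m$ and $0$ elsewhere. Digital point set: for $0\le n<p^m$ with base-$p$ digits $\vec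 n=(n_0,\dots,n_{m-1})^T$, compute $C_i\vec n=(y^{(i)}_1,y^{(i)}_2,\dots)^T$ mod $p$ and set $x^{(i)}_n=\sum_k y^{(i)}_kp^{-k}$. It is a digital $(t,m,3)$-net over $\mathbb{F}_p$ ($0\le t<m$) if for all $d_1,d_2,d_3\in\mathbb{N}_0$ with $d_1+d_2+d_3\le m-t$ the matrix formed by the upper $d_1$ rows of $C_1$, the upper $d_2$ rows of $C_2$ and the upper $d_3$ rows of $C_3$ has full row rank $d_1+d_2+d_3$. *)

From HB Require Import structures.
From mathcomp Require Import all_boot all_order all_algebra.
From mathcomp Require Import boolp.
From mathcomp Require Import zify.
Set Implicit Arguments. Unset Strict Implicit. Unset Printing Implicit Defensive.
Import Order.TTheory GRing.Theory Num.Theory.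
Local Open Scope ring_scope.

(* Formal Laurent series in X^{-1} over a ring F:
   theta = sum_i lcoef theta i * X^{-i}, with i : int,
   and lcoef theta i = 0 for all i < lbound theta. *)
Record laurent (F : nzRingType) := Laurent {
  lcoef : int -> F;
  lbound : int;
  lcoef_lb : forall i : int, i < lbound -> lcoef i = 0 }.

Section Laurent.
Variable F : nzRingType.
Implicit Types (f g : laurent F) (Q : {poly F}).

Definition lequiv f g := forall i, lcoef f i = lcoef g i.

Definition lmul_coef f g (n : int) : F :=
  let m := n - lbound f - lbound g in
  if 0 <= m then
    \sum_(t < (absz m).+1) lcoef f (lbound f + t%:Z) * lcoef g (n - lbound f - t%:Z)
  else 0.

Lemma lmul_lb f g i : i < lbound f + lbound g -> lmul_coef f g i = 0.
Proof.
move=> hi; rewrite /lmul_coef ifF //; apply/negbTE; rewrite -ltNge; lia.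
Qed.

Definition lmul f g : laurent F := @Laurent F (lmul_coef f g) _ (@lmul_lb f g).

Lemma ladd_lb f g i : i < Order.min (lbound f) (lbound g) ->
  lcoef f i + lcoef g i = 0.
Proof.
by rewrite lt_min => /andP[h1 h2]; rewrite (lcoef_lb h1) (lcoef_lb h2) addr0.
Qed.

Definition ladd f g : laurent F :=
  @Laurent F (fun i => lcoef f i + lcoef g i) _ (@ladd_lb f g).

(* a polynomial Q = sum_k Q_k X^k, i.e. coefficient of X^{-i} is Q_{-i} *)
Lemma lpoly_lb Q i : i < - (size Q)%:Z ->
  (if i <= 0 then Q`_(absz i) else 0) = 0.
Proof.
move=> hi; case: ifP => // hi0; apply: nth_default.
case: i hi hi0 => [n|n] /=; rewrite ?NegzE; lia.
Qed.

Definition lpoly Q : laurent F :=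
  @Laurent F (fun i => if i <= 0 then Q`_(absz i) else 0) _ (@lpoly_lb Q).

Lemma lfrac_lb f i : i < 1 -> (if 1 <= i then lcoef f i else 0) = 0.
Proof. by move=> hi; rewrite leNgt hi. Qed.

Definition lfrac f : laurent F :=
  @Laurent F (fun i => if 1 <= i then lcoef f i else 0) _ (@lfrac_lb f).

Definition lnonzero f := exists t : nat, lcoef f (lbound f + t%:Z) != 0.

(* absolute value |f| = 2^{-j} where j is the index of the leading
   nonzero coefficient, |0| = 0 *)
Definition lnorm f : rat :=
  match pselect (exists t : nat, lcoef f (lbound f + t%:Z) != 0) with
  | left H => (2%:Q) ^ (- (lbound f + (ex_minn H)%:Z))
  | right _ => 0
  end.

Definition ldist f : rat := lnorm (lfrac f).

Definition Xadic_LC_counterexample (theta : laurent F) : Prop :=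
  exists eps : rat, 0 < eps /\
    forall (r : nat) (Q : {poly F}), Q != 0 ->
      eps <= lnorm (lpoly Q) * ldist (lmul (lpoly ('X^r * Q)) theta).

(* one step of the continued fraction algorithm for a fractional phi:
   phi != 0 and 1/phi = A + phi' with A a polynomial and phi' fractional *)
Definition cf_step (phi : laurent F) (A : {poly F}) (phi' : laurent F) : Prop :=
  lnonzero phi /\ lequiv phi' (lfrac phi') /\
  lequiv (lmul phi (ladd (lpoly A) phi')) (lpoly 1).

Inductive cf_pq : laurent F -> {poly F} -> Prop :=
  | cf_pq_first phi A phi' : cf_step phi A phi' -> cf_pq phi A
  | cf_pq_next phi B phi' A : cf_step phi B phi' -> cf_pq phi' A -> cf_pq phi A.

End Laurent.

(* Generating matrices N x m, rows indexed by k = 1, 2, ... (entry at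
   row k is C k; row 0 unused), columns by 'I_m *)
Definition Imat (F : nzRingType) (m : nat) : nat -> 'I_m -> F :=
  fun k l => if k == (nat_of_ord l).+1 then 1 else 0.

Definition Hmat (F : nzRingType) (theta : laurent F) (m : nat) : nat -> 'I_m -> F :=
  fun k l => if (1 <= k)%N then lcoef theta (k + l)%:Z else 0.

Definition Jmat (F : nzRingType) (m : nat) : nat -> 'I_m -> F :=
  fun k l => if (1 <= k <= m)%N && (nat_of_ord l == m - k)%N then 1 else 0.

Definition upper_rows (F : nzRingType) (m d : nat) (C : nat -> 'I_m -> F) : 'M[F]_(d, m) :=
  \matrix_(i < d, j < m) C i.+1 j.

Definition digital_net (F : fieldType) (t m : nat) (C1 C2 C3 : nat -> 'I_m -> F) : Prop :=
  (t < m)%N /\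
  forall d1 d2 d3 : nat, (d1 + d2 + d3 <= m - t)%N ->
    \rank (col_mx (col_mx (upper_rows d1 C1) (upper_rows d2 C2)) (upper_rows d3 C3))
      = (d1 + d2 + d3)%N.

From HB Require Import structures.
From mathcomp Require Import all_boot all_order all_algebra.
From mathcomp Require Import boolp zify.
Set Implicit Arguments. Unset Strict Implicit. Unset Printing Implicit Defensive.
Import Order.TTheory GRing.Theory Num.Theory.
Local Open Scope ring_scope.

(* Stack the first d1 rows of I, d2 rows of H(theta) and d3 rows of J, with
   d1 + d2 + d3 <= m - D, and let (v1, v2, v3) be in the left kernel.  The
   columns d1 <= l < m - d3 only see the Hankel block, and there the kernel
   equations say that Q = sum_k v2_k X^k satisfies
   ||Q <X^d1 theta>|| < 2^-(deg Q + D + 1).  For phi = <X^d1 theta> this is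
   impossible unless Q = 0: writing phi = 1/(A + phi') with deg A = L <= D + 1,
   the identity Q = P A + P phi' + <Q phi> (A + phi'), P the polynomial part of
   Q phi, shows that P, of degree deg Q - L, satisfies the same estimate for
   phi', so induction on deg Q applies.  The Littlewood hypothesis keeps every
   <X^d theta> irrational, so the expansion never stops.  Once v2 = 0 the
   identity and antidiagonal blocks force v1 = v3 = 0. *)

Section LaurentRing.
Variable R : nzRingType.
Implicit Types (f g h : laurent R) (P Q : {poly R}).

Definition zero_below f (L : int) := forall i : int, i < L -> lcoef f i = 0.

Lemma zero_below_lbound f : zero_below f (lbound f).
Proof. exact: lcoef_lb. Qed.

Lemma zero_belowW f L L' : zero_below f L -> L' <= L -> zero_below f L'.
Proof. by move=> hf hL i hi; apply: hf; exact: lt_le_trans hi hL. Qed.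

Lemma zero_below_lequiv f g L : lequiv f g -> zero_below f L -> zero_below g L.
Proof. by move=> efg hf i hi; rewrite -efg hf. Qed.

Definition conv f g (n K : int) (M : nat) :=
  \sum_(u < M) lcoef f (K + u%:Z) * lcoef g (n - K - u%:Z).

Lemma conv_widen f g (n K : int) M M' Lg : zero_below g Lg -> n - K - Lg < M%:Z ->
  (M <= M')%N -> conv f g n K M = conv f g n K M'.
Proof.
move=> hg hM hMM'; rewrite /conv -(subnKC hMM') big_split_ord /=.
by rewrite [X in _ = _ + X]big1 ?addr0 // => u _; rewrite hg ?mulr0 //; lia.
Qed.

Lemma conv_shift f g (n K K' : int) M : zero_below f K' -> K <= K' ->
  conv f g n K (absz (K' - K) + M) = conv f g n K' M.
Proof.
move=> hf hK; rewrite /conv big_split_ord /= big1 ?add0r.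
  by apply: eq_bigr => u _; congr (lcoef _ _ * lcoef _ _); lia.
by move=> u _; rewrite hf ?mul0r //=; have := ltn_ord u; lia.
Qed.

Lemma conv_eq f g (n K1 K2 : int) M1 M2 L1 L2 : zero_below f K1 -> zero_below f K2 ->
  zero_below g L1 -> zero_below g L2 -> n - K1 - L1 < M1%:Z -> n - K2 - L2 < M2%:Z ->
  conv f g n K1 M1 = conv f g n K2 M2.
Proof.
wlog hK : K1 K2 M1 M2 L1 L2 / K1 <= K2 => [W|] hf1 hf2 hg1 hg2 hM1 hM2.
  have [hK|hK] := leP K1 K2; first exact: (W K1 K2 M1 M2 L1 L2).
  by symmetry; apply: (W K2 K1 M2 M1 L2 L1) => //; exact: ltW.
rewrite -(conv_shift _ _ M2 hf2 hK).
have [hM|hM] := leqP M1 (absz (K2 - K1) + M2); first exact: conv_widen hg1 hM1 hM.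
by symmetry; apply: (@conv_widen f g n K1 _ _ L2 hg2 _ (ltnW hM)); lia.
Qed.

Lemma ltz_absS (x : int) : x < (absz x).+1%:Z.
Proof. lia. Qed.

Lemma lcoef_lmul f g Lf Lg M (n : int) : zero_below f Lf -> zero_below g Lg ->
  n - Lf - Lg < M%:Z -> lcoef (lmul f g) n = conv f g n Lf M.
Proof.
move=> hf hg hM; rewrite /= /lmul_coef; case: ifP => hn.
  exact: (conv_eq (@zero_below_lbound f) hf (@zero_below_lbound g) hg (ltz_absS _) hM).
have hn' : n - lbound f - lbound g < 0%N by move/negbT: hn; rewrite -ltNge.
by rewrite (conv_eq hf (@zero_below_lbound f) hg (@zero_below_lbound g) hM hn') /conv big_ord0.
Qed.

Lemma zero_below_lmul f g Lf Lg :
  zero_below f Lf -> zero_below g Lg -> zero_below (lmul f g) (Lf + Lg).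
Proof.
by move=> hf hg i hi; rewrite (@lcoef_lmul _ _ _ _ 0 _ hf hg) /conv ?big_ord0 //; lia.
Qed.

Lemma lcoef_lmul_lead f g Lf Lg : zero_below f Lf -> zero_below g Lg ->
  lcoef (lmul f g) (Lf + Lg) = lcoef f Lf * lcoef g Lg.
Proof.
move=> hf hg; rewrite (@lcoef_lmul _ _ _ _ 1 _ hf hg); last lia.
by rewrite /conv big_ord1 /=; congr (lcoef _ _ * lcoef _ _); lia.
Qed.

Lemma lmul_congr f f' g g' :
  lequiv f f' -> lequiv g g' -> lequiv (lmul f g) (lmul f' g').
Proof.
move=> ef eg n; have hf := @zero_below_lbound f; have hg := @zero_below_lbound g.
rewrite (lcoef_lmul hf hg (ltz_absS _)).
rewrite (lcoef_lmul (zero_below_lequiv ef hf) (zero_below_lequiv eg hg) (ltz_absS _)).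
by apply: eq_bigr => u _; rewrite ef eg.
Qed.

Lemma zero_below_ladd f g L :
  zero_below f L -> zero_below g L -> zero_below (ladd f g) L.
Proof. by move=> hf hg i hi /=; rewrite hf ?hg ?addr0. Qed.

Lemma zero_below_min f g :
  zero_below f (Order.min (lbound f) (lbound g)) /\
  zero_below g (Order.min (lbound f) (lbound g)).
Proof.
by split; [apply: (zero_belowW (@zero_below_lbound f)) |
  apply: (zero_belowW (@zero_below_lbound g))]; rewrite ge_min lexx ?orbT.
Qed.

Lemma lmulDr f g h : lequiv (lmul f (ladd g h)) (ladd (lmul f g) (lmul f h)).
Proof.
move=> n; have hf := @zero_below_lbound f; have [hg hh] := zero_below_min g h.
rewrite -[RHS]/(lcoef (lmul f g) n + lcoef (lmul f h) n).
rewrite (lcoef_lmul hf (zero_below_ladd hg hh) (ltz_absS _)).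
rewrite (lcoef_lmul hf hg (ltz_absS _)) (lcoef_lmul hf hh (ltz_absS _)).
by rewrite /conv -big_split /=; apply: eq_bigr => u _; rewrite mulrDr.
Qed.

Lemma lmulDl f g h : lequiv (lmul (ladd f g) h) (ladd (lmul f h) (lmul g h)).
Proof.
move=> n; have hh := @zero_below_lbound h; have [hf hg] := zero_below_min f g.
rewrite -[RHS]/(lcoef (lmul f h) n + lcoef (lmul g h) n).
rewrite (lcoef_lmul (zero_below_ladd hf hg) hh (ltz_absS _)).
rewrite (lcoef_lmul hf hh (ltz_absS _)) (lcoef_lmul hg hh (ltz_absS _)).
by rewrite /conv -big_split /=; apply: eq_bigr => u _; rewrite mulrDl.
Qed.

Definition ltrunc f L (N : nat) : {poly R} := \poly_(t < N) lcoef f (L + t%:Z).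

Lemma lcoef_lmul_ltrunc f g Lf Lg N (t : nat) :
  zero_below f Lf -> zero_below g Lg -> (t < N)%N ->
  lcoef (lmul f g) (Lf + Lg + t%:Z) = (ltrunc f Lf N * ltrunc g Lg N)`_t.
Proof.
move=> hf hg ht; rewrite coefM (@lcoef_lmul _ _ _ _ t.+1 _ hf hg); last lia.
apply: eq_bigr => u _; have hu : (u <= t)%N by rewrite -ltnS.
rewrite !coef_poly (leq_ltn_trans hu ht) (leq_ltn_trans (leq_subr u t) ht).
by congr (_ * lcoef _ _); lia.
Qed.

Lemma ltrunc_lmul f g Lf Lg (N u : nat) : zero_below f Lf -> zero_below g Lg ->
  (u < N)%N -> (ltrunc (lmul f g) (Lf + Lg) N)`_u = (ltrunc f Lf N * ltrunc g Lg N)`_u.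
Proof. by move=> hf hg hu; rewrite coef_poly hu (lcoef_lmul_ltrunc hf hg hu). Qed.

Lemma coefM_eq Q Q' P P' (t : nat) :
  (forall u, (u <= t)%N -> Q`_u = Q'`_u) -> (forall u, (u <= t)%N -> P`_u = P'`_u) ->
  (Q * P)`_t = (Q' * P')`_t.
Proof.
move=> eQ eP; rewrite !coefM; apply: eq_bigr => u _.
have hu : (u <= t)%N by rewrite -ltnS.
by rewrite eQ // eP // leq_subr.
Qed.

Lemma int_split_le (i L : int) : exists (L' : int) (t : nat), L' <= L /\ i = L' + t%:Z.
Proof.
have [hLi|hiL] := lerP L i; first by exists L, (absz (i - L)); split => //; lia.
by exists i, 0%N; split; [exact: ltW | rewrite addr0].
Qed.

(* Each coefficient of a product of three series is a coefficient of a product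
   of three truncations, where associativity is that of {poly R}. *)
Lemma lmulA f g h : lequiv (lmul f (lmul g h)) (lmul (lmul f g) h).
Proof.
move=> i; have [L [t [hL ->]]] := int_split_le i (lbound f + lbound g + lbound h).
have hg := @zero_below_lbound g; have hh := @zero_below_lbound h.
set Lf := L - lbound g - lbound h.
have hf : zero_below f Lf by apply: zero_belowW (@zero_below_lbound f) _; lia.
have -> : L = Lf + (lbound g + lbound h) by rewrite /Lf; lia.
rewrite (lcoef_lmul_ltrunc hf (zero_below_lmul hg hh) (ltnSn t)).
rewrite addrA (lcoef_lmul_ltrunc (zero_below_lmul hf hg) hh (ltnSn t)).
rewrite (@coefM_eq _ (ltrunc f Lf t.+1) _ (ltrunc g (lbound g) t.+1 * ltrunc h (lbound h) t.+1)) //.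
  by rewrite mulrA; apply: coefM_eq => // u hu; rewrite (ltrunc_lmul hf hg).
by move=> u hu; rewrite (ltrunc_lmul hg hh).
Qed.

Lemma lcoef_lpoly Q i : lcoef (lpoly Q) i = if i <= 0 then Q`_(absz i) else 0.
Proof. by []. Qed.

Lemma zero_below_lpoly Q (M : nat) : (size Q <= M)%N -> zero_below (lpoly Q) (1 - M%:Z).
Proof.
move=> hM i hi; rewrite lcoef_lpoly; case: ifP => // _.
by apply: nth_default; apply: leq_trans hM _; lia.
Qed.

Lemma lcoef_lpoly_lead Q : Q != 0 -> lcoef (lpoly Q) (1 - (size Q)%:Z) = lead_coef Q.
Proof.
rewrite -size_poly_gt0 => hQ; rewrite lcoef_lpoly ifT; last lia.
by rewrite /lead_coef; congr Q`_ _; lia.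
Qed.

Lemma lcoef_lmul_lpoly f Q (M : nat) (n : int) : (size Q <= M)%N ->
  lcoef (lmul f (lpoly Q)) n = \sum_(u < M) lcoef f (n + u%:Z) * Q`_u.
Proof.
move=> hM; set K := Order.min (lbound f) n.
have hf : zero_below f K by apply: zero_belowW (@zero_below_lbound f) _; rewrite ge_min lexx.
have hKn : K <= n by rewrite ge_min lexx orbT.
rewrite (@lcoef_lmul _ _ _ _ (absz (n - K) + M) _ hf (zero_below_lpoly hM)); last lia.
rewrite /conv big_split_ord /= big1 ?add0r => [|u _]; last first.
  by rewrite ifF ?mulr0 //; apply/negbTE; rewrite -ltNge; have := ltn_ord u; lia.
apply: eq_bigr => u _; rewrite ifT; last lia.
by congr (lcoef _ _ * Q`_ _); lia.
Qed.

Lemma lmul_lpoly1 f : lequiv (lmul f (lpoly 1)) f.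
Proof.
move=> n; rewrite (@lcoef_lmul_lpoly _ _ 1) ?size_poly1 //.
by rewrite big_ord1 /= addr0 coef1 mulr1.
Qed.

Lemma lcoef_lmul0l f g n : (forall i, lcoef f i = 0) -> lcoef (lmul f g) n = 0.
Proof.
move=> f0; rewrite (lcoef_lmul (@zero_below_lbound f) (@zero_below_lbound g) (ltz_absS _)).
by rewrite /conv big1 // => u _; rewrite f0 mul0r.
Qed.

Lemma lcoef_ladd f g i : lcoef (ladd f g) i = lcoef f i + lcoef g i.
Proof. by []. Qed.

Lemma lpoly_eq0 Q : (forall i, lcoef (lpoly Q) i = 0) -> Q = 0.
Proof.
move=> Q0; apply/polyP => k; rewrite coef0 -[RHS](Q0 (- k%:Z)) lcoef_lpoly.
by rewrite ifT ?oppr_le0 // abszN absz_nat.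
Qed.

Lemma lcoef_lfrac f i : lcoef (lfrac f) i = if 1 <= i then lcoef f i else 0.
Proof. by []. Qed.

Lemma zero_below_lfrac f : zero_below (lfrac f) 1.
Proof. by move=> i hi /=; rewrite leNgt hi. Qed.

Lemma zero_below_exists f : exists K : nat, zero_below f (1 - K%:Z).
Proof. by exists (absz (1 - lbound f)); apply: zero_belowW (@zero_below_lbound f) _; lia. Qed.

Definition ppart f (K : nat) : {poly R} := \poly_(k < K) lcoef f (- k%:Z).

Lemma lequiv_ppart f (K : nat) : zero_below f (1 - K%:Z) ->
  lequiv f (ladd (lpoly (ppart f K)) (lfrac f)).
Proof.
move=> hf i /=; have [hi|hi] := lerP i 0; last by rewrite add0r ifT //; lia.
rewrite ifF ?addr0 ?coef_poly; last by apply/negbTE; rewrite -ltNge; lia.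
case: ltnP => hK; first by congr lcoef; lia.
by rewrite hf //; lia.
Qed.

Definition lpolynomial f := forall j : int, 0 < j -> lcoef f j = 0.

Lemma lequiv_lpoly_ppart f (K : nat) : zero_below f (1 - K%:Z) -> lpolynomial f ->
  lequiv f (lpoly (ppart f K)).
Proof.
move=> hK hf i; rewrite (lequiv_ppart hK i) lcoef_ladd lcoef_lfrac.
case: ifP => hi; last by rewrite addr0.
by rewrite hf ?addr0 //; lia.
Qed.

Lemma size_ppart f (K : nat) (j : int) : zero_below f j -> lcoef f j != 0 ->
  j <= 0 -> 1 - K%:Z <= j -> size (ppart f K) = (absz j).+1.
Proof.
move=> hf hj0 hj hKj; apply/eqP; rewrite eqn_leq; apply/andP; split.
  apply/leq_sizeP => k hk; rewrite coef_poly; case: ifP => // _.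
  by apply: hf; lia.
rewrite ltnNge; apply/negP => /leq_sizeP/(_ (absz j) (leqnn _)).
rewrite coef_poly ifT; last lia.
have -> : - (absz j)%:Z = j by lia.
by move/eqP; rewrite (negbTE hj0).
Qed.

End LaurentRing.

Section LaurentComRing.
Variable R : comNzRingType.
Implicit Types (f g : laurent R) (P Q : {poly R}).

Lemma lmulC f g : lequiv (lmul f g) (lmul g f).
Proof.
move=> i; have [L [t [hL ->]]] := int_split_le i (lbound f + lbound g).
have hg := @zero_below_lbound _ g.
set Lf := L - lbound g.
have hf : zero_below f Lf by apply: zero_belowW (@zero_below_lbound _ f) _; lia.
rewrite -(subrK (lbound g) L) -/Lf (lcoef_lmul_ltrunc hf hg (ltnSn t)).
by rewrite [Lf + _]addrC (lcoef_lmul_ltrunc hg hf (ltnSn t)) mulrC.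
Qed.

Lemma lcoef_lpoly_lmul Q f (M : nat) (n : int) : (size Q <= M)%N ->
  lcoef (lmul (lpoly Q) f) n = \sum_(u < M) Q`_u * lcoef f (n + u%:Z).
Proof.
move=> hM; rewrite lmulC (lcoef_lmul_lpoly _ _ hM).
by apply: eq_bigr => u _; rewrite mulrC.
Qed.

Lemma lpolynomial_lmul_lpoly P Q : lpolynomial (lmul (lpoly P) (lpoly Q)).
Proof.
move=> j hj; rewrite (@lcoef_lpoly_lmul _ _ (size P)) //.
by rewrite big1 // => u _; rewrite lcoef_lpoly ifF ?mulr0 //; lia.
Qed.

End LaurentComRing.

Section LaurentInverse.
Variable F : fieldType.
Implicit Types (f : laurent F) (u : nat -> F).

Fixpoint inv_prefix u (n : nat) : seq F :=
  if n is n'.+1 then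
    let s := inv_prefix u n' in
    rcons s (- (u 0%N)^-1 * \sum_(k < n) u k.+1 * s`_(n' - k))
  else [:: (u 0%N)^-1].

Lemma size_inv_prefix u n : size (inv_prefix u n) = n.+1.
Proof. by elim: n => //= n IH; rewrite size_rcons IH. Qed.

Definition inv_coef u i := (inv_prefix u i)`_i.

Lemma nth_inv_prefix u n i : (i <= n)%N -> (inv_prefix u n)`_i = inv_coef u i.
Proof.
elim: n => [|n IH] hi; first by case: i hi.
have [hin|hni] := leqP i n; last by have -> : i = n.+1 by lia.
by rewrite /= nth_rcons size_inv_prefix ltnS hin IH.
Qed.

Lemma inv_coefE u t : u 0%N != 0 ->
  \sum_(k < t.+1) u k * inv_coef u (t - k) = (t == 0%N)%:R.
Proof.
case: t => [|n] u0; first by rewrite big_ord1 /inv_coef /= mulfV.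
rewrite big_ord_recl subn0 {1}/inv_coef /= nth_rcons size_inv_prefix ltnn eqxx.
rewrite [X in _ + X](_ : _ = \sum_(k < n.+1) u k.+1 * (inv_prefix u n)`_(n - k)).
  by rewrite mulrA mulrN mulfV // mulN1r addNr.
by apply: eq_bigr => k _; rewrite nth_inv_prefix ?leq_subr.
Qed.

Lemma linv_lb f L (i : int) : i < - L ->
  (if - L <= i then inv_coef (fun k => lcoef f (L + k%:Z)) (absz (i + L)) else 0) = 0.
Proof. by move=> hi; rewrite leNgt hi. Qed.

Definition linv f L : laurent F := Laurent (@linv_lb f L).

Lemma linv_spec f L : zero_below f L -> lcoef f L != 0 ->
  [/\ zero_below (linv f L) (- L), lcoef (linv f L) (- L) != 0 &
      lequiv (lmul f (linv f L)) (lpoly 1)].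
Proof.
move=> hf hL; have hinv := @zero_below_lbound _ (linv f L).
split=> //; first by rewrite /= lexx addNr /inv_coef /= addr0 invr_eq0.
move=> n; rewrite lcoef_lpoly coef1; have [hn|hn] := ltrP n 0.
  have -> : (absz n == 0%N) = false by apply/eqP; lia.
  by rewrite (zero_below_lmul hf hinv) ?if_same // addrN.
have [t ->] : exists t : nat, n = t%:Z by exists (absz n); lia.
rewrite (@lcoef_lmul _ _ _ _ _ t.+1 _ hf hinv) /=; last lia.
rewrite (_ : (if t%:Z <= 0 then _ else _) = (t == 0%N)%:R); last by case: t.
rewrite -(@inv_coefE (fun k => lcoef f (L + k%:Z))) ?addr0 //.
apply: eq_bigr => k _; have hk := ltn_ord k.
rewrite /= ifT; last lia.
by congr (_ * inv_coef _ _); lia.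
Qed.

End LaurentInverse.

Section ContinuedFraction.
Variable F : fieldType.
Implicit Types (f g phi psi : laurent F) (A P Q : {poly F}).

Definition lirrational phi := forall Q, Q != 0 -> ~ lpolynomial (lmul (lpoly Q) phi).

(* [lfrac_vanish f n] says ||f|| < 2^-n. *)
Definition lfrac_vanish f (n : nat) := forall j : int, 0 < j -> j <= n%:Z -> lcoef f j = 0.

Definition cf_bounded (B : nat) phi := forall A, cf_pq phi A -> ((size A).-1 <= B)%N.

Lemma lnonzero_lead f : lnonzero f -> exists L, zero_below f L /\ lcoef f L != 0.
Proof.
move=> hf; have [t0 ht0 t0_min] := ex_minnP hf.
exists (lbound f + t0%:Z); split=> // i hi.
have [hib|hib] := ltrP i (lbound f); first exact: zero_below_lbound.
have ei : i = lbound f + (absz (i - lbound f))%:Z by lia.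
by apply/eqP/negPn/negP; rewrite ei => /t0_min; lia.
Qed.

Lemma lnonzeroP f L : lcoef f L != 0 -> lnonzero f.
Proof.
move=> hL; exists (absz (L - lbound f)).
have [hLb|hLb] := ltrP L (lbound f); first by rewrite zero_below_lbound ?eqxx in hL.
by have -> : lbound f + (absz (L - lbound f))%:Z = L by lia.
Qed.

Lemma lirrational_lnonzero phi : lirrational phi -> lnonzero phi.
Proof.
move=> irr; apply/not_existsP => phi0; apply: (irr 1 (oner_neq0 _)) => j _.
rewrite (@lcoef_lpoly_lmul _ _ _ 1) ?size_poly1 // big_ord1 coef1 mul1r addr0.
have [hj|hj] := ltrP j (lbound phi); first exact: zero_below_lbound.
have -> : j = lbound phi + (absz (j - lbound phi))%:Z by lia.
by apply/eqP/negPn/negP; exact: phi0.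
Qed.

Lemma lmulK f g h : lequiv (lmul f g) (lpoly 1) -> lequiv (lmul (lmul h f) g) h.
Proof.
move=> hfg i; rewrite -(lmulA h f g i) (lmul_congr (fun=> erefl) hfg i).
exact: lmul_lpoly1.
Qed.

Lemma cf_step_lead phi L : zero_below phi L -> lcoef phi L != 0 -> 0 <= L ->
  exists A phi', cf_step phi A phi' /\ size A = (absz L).+1.
Proof.
move=> hL hL0 L_ge0; have [hpsi hpsi0 hprod] := linv_spec hL hL0.
have hpsi' : zero_below (linv phi L) (1 - (absz L).+1%:Z) by apply: zero_belowW hpsi _; lia.
exists (ppart (linv phi L) (absz L).+1), (lfrac (linv phi L)); split.
  split; first exact: lnonzeroP hL0.
  split; first by move=> i /=; case: ifP.
  by move=> i; rewrite -(lmul_congr (fun=> erefl) (lequiv_ppart hpsi') i).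
by rewrite -abszN; apply: (size_ppart hpsi hpsi0); lia.
Qed.

Lemma lirrational_cf_step phi A phi' : lirrational phi -> cf_step phi A phi' -> lirrational phi'.
Proof.
move=> irr [_ [_ hprod]] P P0 Pphi'.
set psi := ladd (lpoly A) phi'; set g := lmul (lpoly P) psi.
have hg : lpolynomial g.
  move=> j hj; rewrite (lmulDr _ _ _ j) lcoef_ladd Pphi' // addr0.
  exact: lpolynomial_lmul_lpoly.
have [K hK] := zero_below_exists g.
have eP : lequiv (lmul (lpoly (ppart g K)) phi) (lpoly P).
  move=> i; rewrite -(lmul_congr (lequiv_lpoly_ppart hK hg) (fun=> erefl) i).
  by apply: lmulK => k; rewrite lmulC.
have R0 : ppart g K = 0.
  apply/eqP/negPn/negP => R0; apply: (irr _ R0) => j hj.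
  by rewrite eP lcoef_lpoly ifF //; lia.
move/eqP: P0; apply; apply: lpoly_eq0 => i; rewrite -eP R0.
by apply: lcoef_lmul0l => k; rewrite lcoef_lpoly coef0 if_same.
Qed.

(* With psi = A + phi' = 1/phi, P the polynomial part of g = Q phi:
   Q = g psi = P A + P phi' + <g> psi, whose fractional part vanishes. *)
Lemma cf_step_remainder phi A phi' Q (K : nat) (j : int) :
  lequiv (lmul phi (ladd (lpoly A) phi')) (lpoly 1) ->
  zero_below (lmul (lpoly Q) phi) (1 - K%:Z) -> 0 < j ->
  lcoef (lmul (lpoly (ppart (lmul (lpoly Q) phi) K)) phi') j =
  - lcoef (lmul (lfrac (lmul (lpoly Q) phi)) (ladd (lpoly A) phi')) j.
Proof.
move=> hprod hK hj; apply/eqP; rewrite -addr_eq0.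
have : lcoef (lpoly Q) j = 0 by rewrite lcoef_lpoly ifF //; lia.
rewrite -(lmulK _ hprod j) (lmul_congr (lequiv_ppart hK) (fun=> erefl) j).
rewrite (lmulDl _ _ _ j) lcoef_ladd (lmulDr _ _ _ j) lcoef_ladd.
by rewrite lpolynomial_lmul_lpoly // add0r => /eqP.
Qed.

Lemma zero_below_lfrac_vanish f (n : nat) :
  lfrac_vanish f n -> zero_below (lfrac f) n.+1%:Z.
Proof. by move=> hf i hi; rewrite lcoef_lfrac; case: ifP => // hi1; apply: hf; lia. Qed.

Lemma cf_descent B phi Q : zero_below phi 1 -> lirrational phi -> cf_bounded B phi ->
  Q != 0 -> lfrac_vanish (lmul (lpoly Q) phi) ((size Q).-1 + B) ->
  exists phi' P, [/\ zero_below phi' 1, lirrational phi', cf_bounded B phi', P != 0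
    & (size P < size Q)%N] /\ lfrac_vanish (lmul (lpoly P) phi') ((size P).-1 + B).
Proof.
move=> phi1 irr bnd Q0 van.
have [L [hL hL0]] := lnonzero_lead (lirrational_lnonzero irr).
have L_ge1 : 1 <= L by rewrite leNgt; apply/negP => hL1; rewrite phi1 ?eqxx in hL0.
have [A [phi' [hstep hA]]] := cf_step_lead hL hL0 (le_trans ler01 L_ge1).
have [_ [hfrac hprod]] := hstep.
have L_le_B : (absz L <= B)%N by have := bnd _ (cf_pq_first hstep); rewrite hA.
have phi'1 : zero_below phi' 1.
  by apply: zero_below_lequiv (zero_below_lfrac phi') => i; rewrite -hfrac.
have hpsi : zero_below (ladd (lpoly A) phi') (- L).
  apply: zero_below_ladd; last by apply: zero_belowW phi'1 _; lia.
  by apply: zero_belowW (zero_below_lpoly (eq_leq hA)) _; lia.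
have sQ : (0 < size Q)%N by rewrite size_poly_gt0.
set g := lmul (lpoly Q) phi; set j0 : int := 1 - (size Q)%:Z + L.
have hg : zero_below g j0 := zero_below_lmul (zero_below_lpoly (leqnn _)) hL.
have hg0 : lcoef g j0 != 0.
  rewrite lcoef_lmul_lead ?lcoef_lpoly_lead //; last exact: zero_below_lpoly.
  by rewrite mulf_neq0 ?lead_coef_eq0.
have j0_le0 : j0 <= 0.
  by rewrite leNgt; apply/negP => hj0; move: hg0; rewrite van ?eqxx //; lia.
have hgK : zero_below g (1 - (size Q)%:Z) by apply: zero_belowW hg _; lia.
have sP : size (ppart g (size Q)) = (absz j0).+1 by apply: size_ppart => //; lia.
exists phi', (ppart g (size Q)); split; first split => //.
- exact: lirrational_cf_step irr hstep.
- by move=> A' hA'; apply: bnd; exact: cf_pq_next hstep hA'.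
- by rewrite -size_poly_eq0 sP.
- by rewrite sP; lia.
move=> j hj hjP; rewrite (cf_step_remainder hprod hgK hj).
rewrite (zero_below_lmul (zero_below_lfrac_vanish van) hpsi) ?oppr0 //.
by move: hjP; rewrite sP; lia.
Qed.

Lemma cf_bounded_nonvanish B phi Q : zero_below phi 1 -> lirrational phi ->
  cf_bounded B phi -> Q != 0 -> ~ lfrac_vanish (lmul (lpoly Q) phi) ((size Q).-1 + B).
Proof.
have [n] := ubnP (size Q); elim: n => // n IH in phi Q * => sQ phi1 irr bnd Q0 van.
have [phi' [P [[phi'1 irr' bnd' P0 sP] vanP]]] := cf_descent phi1 irr bnd Q0 van.
by apply: (IH phi' P _ phi'1 irr' bnd' P0 vanP); exact: leq_trans sP _.
Qed.

End ContinuedFraction.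

Section XadicShift.
Variable F : fieldType.
Implicit Types (f theta : laurent F) (Q : {poly F}).

Lemma lcoef_lfrac_Xn theta (s : nat) (j : int) : 0 < j ->
  lcoef (lfrac (lmul (lpoly 'X^s) theta)) j = lcoef theta (j + s%:Z).
Proof.
move=> hj; rewrite lcoef_lfrac ifT; last lia.
rewrite (@lcoef_lpoly_lmul _ _ _ s.+1) ?size_polyXn // big_ord_recr /= big1 ?add0r.
  by rewrite coefXn eqxx mul1r.
by move=> u _; rewrite coefXn ltn_eqF ?mul0r.
Qed.

Lemma lcoef_lpoly_XnM_lmul theta (s : nat) Q (j : int) : 0 < j ->
  lcoef (lmul (lpoly ('X^s * Q)) theta) j =
  lcoef (lmul (lpoly Q) (lfrac (lmul (lpoly 'X^s) theta))) j.
Proof.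
move=> hj; have hsQ : (size ('X^s * Q)%R <= s + size Q)%N.
  apply/leq_sizeP => k hk; rewrite coefXnM; case: ifP => // _.
  by apply: nth_default; rewrite leq_subRL // (leq_trans (leq_addr _ _) hk).
rewrite (lcoef_lpoly_lmul _ _ hsQ) (lcoef_lpoly_lmul _ _ (leqnn (size Q))).
transitivity (\sum_(u < size Q) Q`_u * lcoef theta (j + u%:Z + s%:Z)); last first.
  by apply: eq_bigr => u _; rewrite lcoef_lfrac_Xn //; lia.
rewrite big_split_ord /= big1 ?add0r => [|u _]; last by rewrite coefXnM ltn_ord mul0r.
apply: eq_bigr => u _; rewrite coefXnM ifF ?addKn; last lia.
by congr (_ * lcoef _ _); lia.
Qed.

Lemma ldist_lpolynomial f : lpolynomial f -> ldist f = 0.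
Proof.
move=> hf; rewrite /ldist /lnorm; case: pselect => // -[t ht]; exfalso.
by move: ht; rewrite lcoef_lfrac /= hf ?eqxx //; lia.
Qed.

Lemma lirrational_Xadic theta (s : nat) : Xadic_LC_counterexample theta ->
  lirrational (lfrac (lmul (lpoly 'X^s) theta)).
Proof.
move=> [eps [eps_gt0 LC]] Q Q0 hpoly.
have := LC s Q Q0; rewrite ldist_lpolynomial ?mulr0 => [|j hj].
  by rewrite leNgt eps_gt0.
by rewrite lcoef_lpoly_XnM_lmul ?hpoly.
Qed.

End XadicShift.

Section DigitalNet.
Variables (F : fieldType) (m : nat).
Implicit Types (d : nat) (l : 'I_m).

Lemma upper_rows_mulE d (C : nat -> 'I_m -> F) (v : 'rV_d) l :
  (v *m upper_rows d C) 0 l = \sum_(k < d) v 0 k * C k.+1 l.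
Proof. by rewrite mxE; apply: eq_bigr => k _; rewrite mxE. Qed.

Lemma Imat_comb_out d (v : 'rV[F]_d) l : (d <= l)%N ->
  \sum_(k < d) v 0 k * Imat F k.+1 l = 0.
Proof.
move=> hl; rewrite big1 // => k _; rewrite /Imat eqSS ifF ?mulr0 //.
by apply/negbTE; rewrite neq_ltn (leq_trans (ltn_ord k) hl).
Qed.

Lemma Imat_comb_diag d (v : 'rV[F]_d) (k0 : 'I_d) l : l = k0 :> nat ->
  \sum_(k < d) v 0 k * Imat F k.+1 l = v 0 k0.
Proof.
move=> hl; rewrite (bigD1 k0) //= /Imat eqSS hl eqxx mulr1 big1 ?addr0 // => k hk.
by rewrite eqSS ifF ?mulr0 //; apply/negbTE; apply: contra hk => /eqP h; apply/eqP/val_inj.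
Qed.

Lemma Jmat_comb_out d (v : 'rV[F]_d) l : (l < m - d)%N ->
  \sum_(k < d) v 0 k * Jmat F k.+1 l = 0.
Proof.
move=> hl; rewrite big1 // => k _; rewrite /Jmat ifF ?mulr0 //.
by apply/negbTE/negP => /andP[_ /eqP h]; have := ltn_ord k; lia.
Qed.

Lemma Jmat_comb_antidiag d (v : 'rV[F]_d) (k0 : 'I_d) l : (d <= m)%N ->
  l = (m - k0.+1)%N :> nat -> \sum_(k < d) v 0 k * Jmat F k.+1 l = v 0 k0.
Proof.
move=> hdm hl; have hk0 := ltn_ord k0.
rewrite (bigD1 k0) //= /Jmat hl eqxx ifT ?mulr1; last by apply/andP; split => //; lia.
rewrite big1 ?addr0 // => k hk; rewrite ifF ?mulr0 //.
apply/negbTE/negP => /andP[/andP[_ hkm] /eqP h]; move/negP: hk; apply.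
by apply/eqP/val_inj => /=; lia.
Qed.

Lemma Hmat_comb_lcoef theta d1 d2 (v : 'rV[F]_d2) l (j : int) : 0 < j ->
  l%:Z = d1%:Z + j - 1 -> \sum_(k < d2) v 0 k * Hmat theta k.+1 l =
  lcoef (lmul (lpoly (rVpoly v)) (lfrac (lmul (lpoly 'X^d1) theta))) j.
Proof.
move=> hj hl; rewrite (lcoef_lpoly_lmul _ _ (size_poly _ _)).
apply: eq_bigr => k _; rewrite coef_rVpoly_ord lcoef_lfrac_Xn; last lia.
by rewrite /Hmat; congr (_ * lcoef _ _); lia.
Qed.

Lemma digital_net_IHJ theta (t : nat) : (t < m)%N ->
  (forall d (Q : {poly F}), Q != 0 ->
     ~ lfrac_vanish (lmul (lpoly Q) (lfrac (lmul (lpoly 'X^d) theta))) ((size Q).-1 + t.+1)) ->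
  digital_net t (@Imat F m) (@Hmat _ theta m) (@Jmat F m).
Proof.
move=> htm hH; split=> // d1 d2 d3 hd.
apply/eqP; rewrite -[_ == _]/(row_free _) -kermx_eq0; apply/rowV0P => v /sub_kermxP.
rewrite -[v]hsubmxK -[lsubmx v]hsubmxK !mul_row_col.
set v1 := lsubmx (lsubmx v); set v2 := rsubmx (lsubmx v); set v3 := rsubmx v => hv.
have E l : \sum_(k < d1) v1 0 k * Imat F k.+1 l + \sum_(k < d2) v2 0 k * Hmat theta k.+1 l +
    \sum_(k < d3) v3 0 k * Jmat F k.+1 l = 0.
  have := congr1 (fun A : 'M_(1, m) => A 0 l) hv.
  by rewrite 2!mxE !upper_rows_mulE mxE.
have v2_0 : v2 = 0.
  apply: (can_inj rVpolyK); rewrite linear0; apply/eqP/negPn/negP => Q0.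
  have sQ : (0 < size (rVpoly v2) <= d2)%N by rewrite size_poly_gt0 Q0 size_poly.
  apply: (hH d1 _ Q0) => j hj hjQ.
  have hl : (d1 + (absz j).-1 < m)%N by lia.
  rewrite -(@Hmat_comb_lcoef theta d1 d2 v2 (Ordinal hl) j hj) /=; last lia.
  have := E (Ordinal hl); rewrite Imat_comb_out ?Jmat_comb_out ?add0r ?addr0 //=; lia.
have {}E l : \sum_(k < d1) v1 0 k * Imat F k.+1 l + \sum_(k < d3) v3 0 k * Jmat F k.+1 l = 0.
  by rewrite -[RHS](E l) v2_0 [X in _ + X + _]big1 ?addr0 // => k _; rewrite mxE mul0r.
have v1_0 : v1 = 0.
  apply/rowP => k0; rewrite [RHS]mxE; have hk0 := ltn_ord k0.
  have hl : (k0 < m)%N by lia.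
  by have := E (Ordinal hl); rewrite (Imat_comb_diag _ (k0 := k0)) // Jmat_comb_out ?addr0 //=; lia.
have v3_0 : v3 = 0.
  apply/rowP => k0; rewrite [RHS]mxE; have hk0 := ltn_ord k0.
  have hl : (m - k0.+1 < m)%N by lia.
  have := E (Ordinal hl); rewrite (Jmat_comb_antidiag _ (k0 := k0)) //; last lia.
  by rewrite Imat_comb_out ?add0r //=; lia.
by rewrite v1_0 v2_0 v3_0 !row_mx0.
Qed.

End DigitalNet.

Theorem lemma4 (p : nat) (hp : prime p) (theta : laurent 'F_p) (D : nat) :
  Xadic_LC_counterexample theta ->
  (forall (r : nat) (A : {poly 'F_p}),
      cf_pq (lfrac (lmul (lpoly 'X^r) theta)) A -> ((size A).-1 <= D.+1)%N) ->
  forall m : nat, (D < m)%N ->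
    digital_net D (@Imat 'F_p m) (@Hmat _ theta m) (@Jmat 'F_p m).
Proof.
move=> LC hcf m hDm; apply: digital_net_IHJ => // d Q Q0.
apply: cf_bounded_nonvanish Q0.
- exact: zero_below_lfrac.
- exact: lirrational_Xadic.
- exact: hcf.
Qed.
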